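(* Let $\mathbb F$ be a finite field with $q$ elements and let $A$ be an $m$-dimensional $\mathbb F$-algebra which can be generated by $r\ge1$ elements as an $\mathbb F$-algebra. For $k\ge r$ let $\mathrm{ng}_k$ be the number of $k$-tuples in $A^k$ which do not generate $A$ as an $\mathbb F$-algebra. Then $\mathrm{ng}_k\le m^{2k/r}q^{mk-k/r}$ for every $k>r$.
   Context: Algebras are associative and unital; elements generate $A$ if the non-commutative monomials in them (including $1$) span $A$. *)

From HB Require Import structures.
From mathcomp Require Import all_boot all_order all_algebra all_fingroup all_field.
From Stdlib Require Import Reals ClassicalEpsilon.
Set Implicit Arguments. Unset Strict Implicit. Unset Printing Implicit Defensive.
Import GRing.Theory.

Local Open Scope ring_scope.

(* Elements X (a finite sequence in A) generate the algebra A if the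
   non-commutative monomials in them (finite products of elements of X,
   the empty product being 1) span A over F. *)
Definition generates (F : fieldType) (A : falgType F) (X : seq A) : Prop :=
  forall v : A, exists ws : seq (seq A),
    all (fun w => all (fun a => a \in X) w) ws /\
    v \in <<[seq \prod_(a <- w) a | w <- ws]>>%VS.

Definition generatesb (F : fieldType) (A : falgType F) (X : seq A) : bool :=
  if excluded_middle_informative (generates X) then true else false.

Definition ng (F : finFieldType) (A : falgType F) (k : nat) : nat :=
  #|[set t : k.-tuple (finvect_type A) | ~~ generatesb (A := A) t]|.

From HB Require Import structures.
From mathcomp Require Import all_boot all_order all_algebra all_fingroup all_field zify.
From Stdlib Require Import Reals ClassicalEpsilon.

(** If a k-tuple does not generate A, neither does any window of r cyclically
    consecutive entries; every position lies in exactly r windows, so Shearer's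
    lemma (proved by induction from Hölder's inequality) gives ng_k^r <= ng_r^k.
    To bound ng_r, fix a generating r-tuple X; the monomials of degree < m in X
    span A, so some m of them form a basis.  For a direction d the same monomials
    in X + t d, viewed as polynomials in t, have a coordinate determinant that is
    nonzero at t = 0 and of degree at most m(m-1); so at most m(m-1) points of each
    line X + t d fail to generate.  Averaging over all lines through X yields (q-1) ng_r <= q^(mr) m(m-1),
    hence ng_r <= m^2 q^(mr-1) and ng_k <= ng_r^(k/r) <= (m^2 q^(mr-1))^(k/r). *)

Set Implicit Arguments. Unset Strict Implicit. Unset Printing Implicit Defensive.
Import Order.TTheory GRing.Theory Num.Theory.
Local Open Scope ring_scope.

Section Holder.
Variables (R : realFieldType) (I : finType).

Lemma sum_exp_le (n : nat) (c u : I -> R) (P : R) :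
  (0 < n)%nat -> 0 <= P -> (forall x, 0 <= c x) -> (forall x, 0 <= u x) ->
  \sum_x u x = 1 -> (forall x, c x ^+ n <= P * u x ^+ n) ->
  (\sum_x c x) ^+ n <= P.
Proof.
move=> n_gt0 P_ge0 c_ge0 u_ge0 u_sum1 le_cu; set s := \sum_x c x.
rewrite leNgt; apply/negP => lt_P_s.
have s_ge0 : 0 <= s by apply: sumr_ge0.
have le_c x : c x <= s * u x.
  rewrite -(ler_pXn2r n_gt0) ?nnegrE ?mulr_ge0 //; apply: le_trans (le_cu x) _.
  by rewrite exprMn ler_wpM2r ?exprn_ge0 // ltW.
have [x0 /andP[_ u_x0]] : exists x, predT x && (0 < u x).
  by apply: psumr_neq0P => //; apply/eqP; rewrite u_sum1 oner_neq0.
have lt_c : c x0 < s * u x0.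
  rewrite -(ltr_pXn2r n_gt0) ?nnegrE ?mulr_ge0 //; apply: le_lt_trans (le_cu x0) _.
  by rewrite exprMn ltr_pM2r ?exprn_gt0.
have : s < s * \sum_x u x.
  rewrite mulr_sumr [X in X < _](bigD1 x0) // [X in _ < X](bigD1 x0) //=.
  by rewrite ltr_leD // ler_sum.
by rewrite u_sum1 mulr1 ltxx.
Qed.

Lemma holder_ord (n : nat) (b : 'I_n -> I -> R) (c : I -> R) (K : R) :
  (0 < n)%nat -> 0 <= K -> (forall x, 0 <= c x) -> (forall j x, 0 <= b j x) ->
  (forall x, c x ^+ n <= K * \prod_j b j x) ->
  (\sum_x c x) ^+ n <= K * \prod_j \sum_x b j x.
Proof.
move=> n_gt0 K_ge0 c_ge0 b_ge0 le_cb; pose B j := \sum_x b j x.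
have B_ge0 j : 0 <= B j by apply: sumr_ge0.
have KB_ge0 : 0 <= K * \prod_j B j by rewrite mulr_ge0 // prodr_ge0.
have [/existsP[j /eqP Bj0] | /existsPn B_neq0] := boolP [exists j, B j == 0].
  have c0 x : c x = 0.
    suff : c x ^+ n == 0 by rewrite expf_eq0 n_gt0 => /eqP.
    rewrite eq_le exprn_ge0 // andbT; apply: le_trans (le_cb x) _.
    by rewrite (bigD1 j) //= (psumr_eq0P (fun x _ => b_ge0 j x) Bj0) // mul0r mulr0.
  by rewrite big1 // expr0n gtn_eqF.
pose u x := (\sum_j b j x / B j) / n%:R.
apply: (sum_exp_le (u := u)) => //.
- by move=> x; rewrite divr_ge0 ?ler0n // sumr_ge0 // => j _; rewrite divr_ge0.
- rewrite /u -mulr_suml exchange_big /=.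
  under eq_bigr => j _ do rewrite -mulr_suml divff ?B_neq0 //.
  by rewrite sumr_const card_ord divff // pnatr_eq0 -lt0n.
move=> x; apply: le_trans (le_cb x) _.
have -> : \prod_j b j x = \prod_j B j * \prod_j (b j x / B j).
  by rewrite -big_split /=; apply: eq_bigr => j _; rewrite mulrCA divff ?mulr1.
rewrite mulrA ler_wpM2l ?mulr_ge0 ?prodr_ge0 //.
have [AGM _] := @leif_AGM R 'I_n predT (fun j => b j x / B j)
  (fun j _ => divr_ge0 (b_ge0 j x) (B_ge0 j)).
by move: AGM; rewrite card_ord.
Qed.

Lemma holder (J : Type) (l : seq J) (b : J -> I -> R) (c : I -> R) (K : R) :
  (0 < size l)%nat -> 0 <= K -> (forall x, 0 <= c x) -> (forall j x, 0 <= b j x) ->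
  (forall x, c x ^+ size l <= K * \prod_(j <- l) b j x) ->
  (\sum_x c x) ^+ size l <= K * \prod_(j <- l) \sum_x b j x.
Proof.
move=> l_gt0 K_ge0 c_ge0 b_ge0 le_cb; rewrite big_tnth.
by apply: holder_ord => // x; move: (le_cb x); rewrite big_tnth.
Qed.

End Holder.

Lemma leq_card_imset_factor (D E E' : finType) (f : D -> E) (g : D -> E') (S : {set D}) :
  {in S &, forall s s', g s = g s' -> f s = f s'} -> (#|f @: S| <= #|g @: S|)%nat.
Proof.
move=> fg; have [->|[s0 _]] := set_0Vmem S; first by rewrite !imset0 cards0.
pose h y := f (odflt s0 [pick s in S | g s == y]).
suff -> : f @: S = h @: (g @: S) by apply: leq_imset_card.
apply/setP => y; apply/imsetP/imsetP => [[s sS ->] | [_ /imsetP[s sS ->] ->]].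
  exists (g s); first exact: imset_f.
  rewrite /h; case: pickP => [s' /andP[s'S /eqP e]|].
    exact: fg _ _ sS s'S (esym e).
  by move/(_ s); rewrite sS eqxx.
rewrite /h; case: pickP => [s' /andP[s'S _]|]; first by exists s'.
by move/(_ s); rewrite sS eqxx.
Qed.

Section Shearer.
Variables (T : finType) (k : nat).
Implicit Types (U V W : {set 'I_k}) (S : {set {ffun 'I_k -> T}}).

Definition restrict W (s : {ffun 'I_k -> T}) : {ffun 'I_k -> option T} :=
  [ffun j => if j \in W then Some (s j) else None].

Definition nproj W S := #|restrict W @: S|.

Definition fiber (i : 'I_k) (x : T) S := [set s in S | s i == x].

Lemma nproj_set0 S : nproj set0 S = (S != set0).
Proof.
have [->|[s0 s0S]] := set_0Vmem S; first by rewrite /nproj imset0 cards0 eqxx.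
have -> : S != set0 by apply/set0Pn; exists s0.
rewrite /nproj (_ : _ @: S = [set restrict set0 s0]) ?cards1 //; apply/setP => y.
rewrite inE; apply/imsetP/eqP => [[s _ ->] | ->]; last by exists s0.
by apply/ffunP => j; rewrite !ffunE inE.
Qed.

Lemma nproj_setT S : nproj setT S = #|S|.
Proof.
apply: card_in_imset => s s' _ _ /ffunP eq_ss'; apply/ffunP => j.
by have := eq_ss' j; rewrite !ffunE inE => -[].
Qed.

Lemma nproj_leW V W S : V \subset W -> (nproj V S <= nproj W S)%nat.
Proof.
move=> /subsetP VW; apply: leq_card_imset_factor => s s' _ _ /ffunP eq_ss'.
apply/ffunP => j; rewrite !ffunE; case: ifP => // /VW jW.
by have := eq_ss' j; rewrite !ffunE jW.
Qed.

Lemma nproj_leS W S1 S2 : S1 \subset S2 -> (nproj W S1 <= nproj W S2)%nat.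
Proof. by move=> S12; apply/subset_leq_card/imsetS. Qed.

Lemma nproj_fiber i W S : i \in W -> nproj W S = \sum_x nproj W (fiber i x S).
Proof.
move=> iW; have [->|[s0 _]] := set_0Vmem S.
  rewrite /nproj imset0 cards0 big1 // => x _.
  rewrite (_ : fiber i x set0 = set0) ?imset0 ?cards0 //.
  by apply/setP => s; rewrite !inE.
rewrite /nproj -sum1_card.
rewrite (partition_big (fun y : {ffun 'I_k -> option T} => odflt (s0 i) (y i)) predT) //=.
apply: eq_bigr => x _; rewrite -sum1_card; apply: eq_bigl => y.
apply/andP/imsetP => [[/imsetP[s sS ->]] | [s]].
  by rewrite ffunE iW /= => /eqP sx; exists s; rewrite // inE sS sx eqxx.
rewrite inE => /andP[sS /eqP sx] ->; split; first exact: imset_f.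
by rewrite ffunE iW /= sx.
Qed.

Lemma nproj_fiberD1 i x U S :
  (nproj U (fiber i x S) <= nproj (U :\ i) (fiber i x S))%nat.
Proof.
apply: leq_card_imset_factor => s s'; rewrite !inE.
move=> /andP[_ /eqP si] /andP[_ /eqP s'i] /ffunP eq_ss'; apply/ffunP => j.
have [->|ji] := eqVneq j i; first by rewrite !ffunE si s'i.
by have := eq_ss' j; rewrite !ffunE !inE ji.
Qed.

Lemma shearer_restrict (R : realFieldType) (r : nat) (Fs : seq {set 'I_k}) U S :
  (0 < r)%nat -> (forall i, count (fun W => i \in W) Fs = r) ->
  (nproj U S)%:R ^+ r <= \prod_(W <- Fs) (nproj (W :&: U) S)%:R :> R.
Proof.
move=> r_gt0 cover; move: {2}#|U| (erefl #|U|) => n.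
elim: n U S => [|n IH] U S cardU.
  move/eqP: cardU; rewrite cards_eq0 => /eqP ->.
  under eq_bigr => W _ do rewrite setI0.
  rewrite nproj_set0; case: (S != set0) => /=; first by rewrite expr1n big1.
  by rewrite expr0n gtn_eqF //; apply: prodr_ge0.
have [i iU] : exists i, i \in U by apply/set0Pn; rewrite -card_gt0 cardU.
have cardUi : #|U :\ i| = n by move: cardU; rewrite (cardsD1 i) iU => -[].
set l := [seq W <- Fs | i \in (W : {set 'I_k})].
have size_l : size l = r by rewrite size_filter cover.
have sum_fiber W : W \in l ->
    (nproj (W :&: U) S)%:R = \sum_x (nproj (W :&: U) (fiber i x S))%:R :> R.
  by rewrite mem_filter => /andP[iW _]; rewrite -natr_sum -nproj_fiber // inE iW.
rewrite (nproj_fiber S iU) natr_sum (bigID (fun W => i \in W)) /= mulrC.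
rewrite -[X in _ <= _ * X]big_filter -/l (eq_big_seq _ sum_fiber) -{1}size_l.
apply: holder => //; first by rewrite size_l.
- by apply: prodr_ge0.
move=> x; rewrite size_l.
apply: le_trans (_ : (nproj (U :\ i) (fiber i x S))%:R ^+ r <= _).
  by rewrite lerXn2r ?nnegrE ?ler0n // ler_nat nproj_fiberD1.
apply: le_trans (IH _ _ cardUi) _.
rewrite (bigID (fun W => i \in W)) /= mulrC -[X in _ * X <= _]big_filter -/l.
apply: ler_pM; try by apply: prodr_ge0.
- apply: ler_prod => W iW; rewrite ler0n ler_nat.
  have -> : W :&: (U :\ i) = W :&: U.
    by apply/setP => j; rewrite !inE; case: eqVneq => // ->; rewrite (negPf iW).
  by apply/nproj_leS/subsetP => s; rewrite inE => /andP[].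
- apply: ler_prod => W _; rewrite ler0n ler_nat.
  by apply/nproj_leW/setIS/subD1set.
Qed.

Lemma shearer (R : realFieldType) (r : nat) (Fs : seq {set 'I_k}) S :
  (0 < r)%nat -> (forall i, count (fun W => i \in W) Fs = r) ->
  #|S|%:R ^+ r <= \prod_(W <- Fs) (nproj W S)%:R :> R.
Proof.
move=> r_gt0 cover; rewrite -nproj_setT.
by under eq_bigr => W _ do rewrite -[W in nproj W]setIT; apply: shearer_restrict.
Qed.

End Shearer.

Section Windows.
Variables (n r : nat).
Hypothesis r_le : (r <= n.+1)%nat.

Definition window (i : 'I_n.+1) : {set 'I_n.+1} := [set j : 'I_n.+1 | ltn (j - i) r].

Lemma count_window (j : 'I_n.+1) :
  count (fun W : {set 'I_n.+1} => j \in W) [seq window i | i <- enum 'I_n.+1] = r.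
Proof.
rewrite count_map enumT -size_filter -cardE.
have windows_j : [pred i | j \in window i] =i [set j - widen_ord r_le l | l : 'I_r].
  move=> i; rewrite !inE; apply/idP/imsetP => [lt_ji_r | [l _ ->]].
    exists (Ordinal lt_ji_r) => //.
    have -> : widen_ord r_le (Ordinal lt_ji_r) = j - i by apply: val_inj.
    by rewrite opprB addrC subrK.
  by rewrite opprB addrC subrK /= ltn_ord.
rewrite (eq_card windows_j) card_imset ?card_ord // => l l'.
by move=> /addrI/oppr_inj/(congr1 val) /= eq_ll'; apply: val_inj.
Qed.

End Windows.

Section NonGenerating.
Variables (F : finFieldType) (A : falgType F).

Lemma generatesbP (X : seq A) : reflect (generates X) (generatesb X).
Proof. by rewrite /generatesb; case: excluded_middle_informative => h; constructor. Qed.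

Lemma generates_subset (X Y : seq A) : {subset X <= Y} -> generates X -> generates Y.
Proof.
move=> XY genX v; have [ws [ws_X v_span]] := genX v; exists ws; split => //.
by apply/allP => w /(allP ws_X) /allP w_X; apply/allP => a /w_X /XY.
Qed.

Lemma ng_exp_le (r k : nat) : (0 < r)%nat -> (r <= k)%nat ->
  (expn (ng A k) r <= expn (ng A r) k)%nat.
Proof.
case: k => [|n]; first by case: r.
move=> r_gt0 r_le; pose T := finvect_type A.
pose NG k := [set t : k.-tuple T | ~~ generatesb (A := A) t].
pose S := [set [ffun j => tnth t j] | t in NG n.+1].
have cardS : #|S| = ng A n.+1.
  apply: card_imset => t t' /ffunP eq_tt'; apply: eq_from_tnth => j.
  by have := eq_tt' j; rewrite !ffunE.
pose wtuple i (s : {ffun 'I_n.+1 -> T}) : r.-tuple T := [tuple s (i + inord l) | l < r].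
have nproj_window i : (nproj (window r i) S <= ng A r)%nat.
  apply: leq_trans (leq_card_imset_factor (g := wtuple i) _) _.
    move=> s s' _ _ eq_ss'; apply/ffunP => j; rewrite !ffunE inE.
    case: ifP => // lt_ji_r; congr Some.
    have := congr1 (fun u => tnth u (Ordinal lt_ji_r)) eq_ss'.
    by rewrite !tnth_mktuple (_ : inord _ = j - i) ?inord_val // addrC subrK.
  apply/subset_leq_card/subsetP => _ /imsetP[_ /imsetP[t tNG ->] ->].
  rewrite inE; move: tNG; rewrite inE; apply: contra => /generatesbP gen_w.
  apply/generatesbP; apply: generates_subset gen_w => _ /tnthP[l ->].
  by rewrite tnth_mktuple ffunE mem_tnth.
rewrite -(@ler_nat rat) !natrX -cardS.
apply: le_trans (shearer rat S r_gt0 (count_window r_le)) _.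
rewrite big_map big_enum /= -[n.+1 in X in _ <= X]card_ord -prodr_const.
by apply: ler_prod => i _; rewrite ler0n ler_nat nproj_window.
Qed.

End NonGenerating.

Section Words.
Variable r : nat.

Fixpoint words (l : nat) : seq (seq 'I_r) :=
  if l is l'.+1 then [::] :: [seq j :: w | j <- enum 'I_r, w <- words l'] else [:: [::]].

Lemma mem_words l w : (w \in words l) = (size w <= l)%nat.
Proof.
elim: l w => [|l IHl] [|j w] //=; rewrite inE /= ltnS -IHl.
apply/allpairsP/idP => [[[j' w'] [_ /= w'_l [_ ->]]] // | w_l].
by exists (j, w); rewrite mem_enum.
Qed.

End Words.

Section Monomials.
Variables (F : fieldType) (A : falgType F) (r : nat).
Implicit Type t : r.-tuple A.

Definition monomials t l := [seq \prod_(j <- w) tnth t j | w <- words r l].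

Lemma span_monomialsS t l : (<<monomials t l>> <= <<monomials t l.+1>>)%VS.
Proof.
apply/sub_span => _ /mapP[w w_l ->]; apply: map_f.
by rewrite mem_words (leq_trans _ (leqnSn l)) // -mem_words.
Qed.

Lemma mul_span_monomials t l j v :
  v \in <<monomials t l>>%VS -> tnth t j * v \in <<monomials t l.+1>>%VS.
Proof.
move=> v_l; rewrite (coord_span (X := in_tuple (monomials t l)) v_l) mulr_sumr.
apply: memv_suml => i _.
rewrite -scalerAr; apply/memvZ/memv_span.
have /mapP[w w_l ->] := mem_nth 0 (ltn_ord i).
have -> : tnth t j * \prod_(k <- w) tnth t k = \prod_(k <- j :: w) tnth t k.
  by rewrite big_cons.
by apply: map_f; rewrite mem_words /= ltnS -mem_words.
Qed.

Lemma span_monomials_closed t l : <<monomials t l.+1>>%VS = <<monomials t l>>%VS ->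
  forall w : seq A, all (fun a => a \in t) w -> \prod_(a <- w) a \in <<monomials t l>>%VS.
Proof.
move=> stable; elim=> [|a w IHw] /=.
  move=> _; rewrite big_nil; apply: memv_span.
  rewrite (_ : 1 = \prod_(j <- [::]) tnth t j); last by rewrite big_nil.
  by apply: map_f; rewrite mem_words.
case/andP => /tnthP[j ->] /IHw w_l; rewrite big_cons -stable.
exact: mul_span_monomials.
Qed.

Lemma stable_span_monomials_full t l : generates t ->
  <<monomials t l.+1>>%VS = <<monomials t l>>%VS -> <<monomials t l>>%VS = fullv.
Proof.
move=> gen_t stable; apply/eqP; rewrite eqEsubv subvf; apply/subvP => v _.
have [ws [ws_t v_ws]] := gen_t v; apply: subvP v_ws; apply/span_subvP.
by move=> _ /mapP[w /(allP ws_t) w_t ->]; apply: span_monomials_closed.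
Qed.

Lemma dim_span_monomials t l : generates t ->
  (l < \dim <<monomials t l>>)%nat \/ <<monomials t l>>%VS = fullv.
Proof.
move=> gen_t; elim: l => [|l [lt_l_dim | full_l]].
- by left; rewrite span_seq1 big_nil dim_vline oner_neq0.
- have [stable | unstable] := eqVneq <<monomials t l.+1>>%VS <<monomials t l>>%VS.
    by right; rewrite stable (stable_span_monomials_full gen_t stable).
  left; apply: leq_ltn_trans lt_l_dim _.
  rewrite ltn_neqAle dimvS ?span_monomialsS // andbT; apply: contra unstable.
  by move=> /eqP dim_eq; rewrite eq_sym eqEdim span_monomialsS dim_eq /=.
- by right; apply/eqP; rewrite eqEsubv subvf -full_l span_monomialsS.
Qed.

Lemma span_monomials_full t : generates t ->
  <<monomials t (\dim {:A}).-1>>%VS = fullv.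
Proof.
move=> gen_t; have [|//] := dim_span_monomials (\dim {:A}).-1 gen_t.
rewrite prednK ?adim_gt0 // => dim_full; apply/eqP.
by rewrite eqEdim subvf dim_full.
Qed.

Lemma generates_monomials t l : <<monomials t l>>%VS = fullv -> generates t.
Proof.
move=> full v; exists [seq [seq tnth t j | j <- w] | w <- words r l]; split.
  by apply/allP => _ /mapP[w _ ->]; apply/allP => _ /mapP[j _ ->]; apply: mem_tnth.
by rewrite -map_comp (eq_map (fun w => big_map _ _ _)) -/(monomials t l) full memvf.
Qed.

End Monomials.

Lemma size_prod_seq_leq (R : nzRingType) (I : Type) (s : seq I) (G : I -> {poly R})
    (n : nat) :
  (forall i, size (G i) <= n.+1)%nat ->
  leq (size (\prod_(i <- s) G i)) (muln (size s) n).+1.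
Proof.
move=> size_G; elim: s => [|i s IHs]; first by rewrite big_nil size_poly1.
rewrite big_cons (leq_trans (size_polyMleq _ _)) // -subn1 leq_subLR.
by rewrite (leq_trans (leq_add (size_G i) IHs)) // mulSn addSn addnS.
Qed.

Section Line.
Variables (F : fieldType) (A : falgType F) (r : nat) (X d : r.-tuple A).

Definition line (mu : F) : r.-tuple A := [tuple tnth X j + mu *: tnth d j | j < r].

Definition line_poly (j : 'I_r) : {poly A} := (tnth X j)%:P + 'X * (tnth d j)%:P.

Definition monomial_polys l := [seq \prod_(j <- w) line_poly j | w <- words r l].

Lemma line0 : line 0 = X.
Proof. by apply: eq_from_tnth => j; rewrite tnth_mktuple scale0r addr0. Qed.

Lemma horner_prod_line_poly mu w :
  (\prod_(j <- w) line_poly j).[mu%:A] = \prod_(j <- w) tnth (line mu) j.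
Proof.
have mu_central (p : {poly A}) : comm_poly p mu%:A.
  by rewrite /comm_poly mulr_algl mulr_algr.
elim: w => [|j w IHw]; first by rewrite !big_nil hornerC.
rewrite !big_cons hornerM_comm // IHw tnth_mktuple hornerD hornerC hornerM_comm //.
by rewrite hornerX hornerC mulr_algl.
Qed.

Lemma horner_monomial_polys mu l :
  [seq p.[mu%:A] | p <- monomial_polys l] = monomials (line mu) l.
Proof. by rewrite -map_comp; apply: eq_map => w; apply: horner_prod_line_poly. Qed.

Lemma size_monomial_polys l p : p \in monomial_polys l -> (size p <= l.+1)%nat.
Proof.
case/mapP=> w; rewrite mem_words => w_l ->.
apply: leq_trans (size_prod_seq_leq _ (n := 1) _) _; last by rewrite muln1.
move=> j; rewrite (leq_trans (size_polyD _ _)) // geq_max.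
rewrite (leq_trans (size_polyC_leq1 _)) //.
rewrite (leq_trans (size_polyMleq _ _)) // size_polyX.
by have := size_polyC_leq1 (tnth d j); case: (size _).
Qed.

End Line.

Section CoordMatrix.
Variables (F : fieldType) (vT : vectType F).
Local Notation m := (\dim {:vT}).
Local Notation coord_vb := (coord (vbasis {:vT})).

Definition coord_mx (u : m.-tuple vT) : 'M[F]_m := \matrix_(i, j) coord_vb j (tnth u i).

Lemma mul_coord_mx (u : m.-tuple vT) (z : 'rV_m) :
  z *m coord_mx u = \row_j coord_vb j (\sum_i z 0 i *: tnth u i).
Proof.
by apply/rowP => j; rewrite !mxE linear_sum; apply: eq_bigr => i _; rewrite mxE linearZ.
Qed.

Lemma det_coord_mx (u : m.-tuple vT) : (\det (coord_mx u) != 0) = free u.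
Proof.
have sum_nth (z : 'rV_m) : \sum_i z 0 i *: tnth u i = \sum_i z 0 i *: u`_i.
  by apply: eq_bigr => i _; rewrite (tnth_nth 0).
apply/idP/idP => [det_neq0 | u_free].
  apply/freeP => k sum0 i; have : \row_i k i *m coord_mx u = 0.
    apply/rowP => j; rewrite mul_coord_mx sum_nth !mxE.
    by under eq_bigr do rewrite mxE; rewrite sum0 linear0.
  move/(congr1 (mulmx^~ (invmx (coord_mx u)))); rewrite mulmxK ?unitmxE ?unitfE //.
  by rewrite mul0mx => /rowP/(_ i); rewrite !mxE.
apply/det0P => -[z z_neq0 zM0]; move/freeP: u_free => /(_ (z 0)) u_free.
suff : z = 0 by apply/eqP.
apply/rowP => i; rewrite mxE u_free // -sum_nth.
rewrite (coord_vbasis (memvf (\sum_i _))); apply: big1 => j _.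
by move/rowP: zM0 => /(_ j); rewrite mul_coord_mx !mxE => ->; rewrite scale0r.
Qed.

End CoordMatrix.

Lemma horner_map_coord (F : fieldType) (A : falgType F) (j : 'I_(\dim {:A}))
    (p : {poly A}) (mu : F) :
  (map_poly (coord (vbasis {:A}) j) p).[mu] = coord (vbasis {:A}) j p.[mu%:A].
Proof.
have size_map : leq (size (map_poly (coord (vbasis {:A}) j) p)) (size p).
  by rewrite map_polyE (leq_trans (size_Poly _)) ?size_map.
rewrite (horner_coef_wide mu size_map) (horner_coef_wide _ (leqnn (size p))).
rewrite linear_sum; apply: eq_bigr => i _.
by rewrite coef_map_id0 ?linear0 // exprZn expr1n mulr_algr linearZ mulrC.
Qed.

Lemma size_det_leq (R : comNzRingType) (k n : nat) (M : 'M[{poly R}]_k) :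
  (forall i j, size (M i j) <= n.+1)%nat -> leq (size (\det M)) (muln k n).+1.
Proof.
move=> size_M; rewrite /determinant (leq_trans (size_sum _ _ _)) //.
apply/bigmax_leqP => s _.
have : leq (size (\prod_i M i (s i))) (muln k n).+1.
  have := size_prod_seq_leq (index_enum 'I_k) (fun i => size_M i (s i)).
  by rewrite /index_enum -enumT size_enum_ord.
by case: (odd_perm s); rewrite /= ?expr1 ?mulN1r ?size_polyN ?expr0 ?mul1r.
Qed.

Lemma card_root_leq (F : finFieldType) (p : {poly F}) :
  p != 0 -> (#|[set x | root p x]| <= (size p).-1)%nat.
Proof.
move=> p_neq0; rewrite cardE -ltnS prednK ?size_poly_gt0 //.
apply: max_poly_roots => //; last exact: enum_uniq.
by apply/allP => x; rewrite mem_enum inE.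
Qed.

Lemma free_mask_span (F : fieldType) (vT : vectType F) (s : seq vT) :
  exists msk, free (mask msk s) /\ <<mask msk s>>%VS = <<s>>%VS.
Proof.
elim: s => [|x s [msk [free_s span_s]]]; first by exists [::]; rewrite /= nil_free.
have [x_s | x_notin] := boolP (x \in <<mask msk s>>%VS).
  exists (false :: msk); split => //=.
  by rewrite span_cons -span_s; apply/esym/addv_idPr; rewrite -memvE.
by exists (true :: msk); rewrite /= free_cons x_notin free_s !span_cons span_s.
Qed.

Section LineDeterminant.
Variables (F : fieldType) (A : falgType F) (r : nat) (X d : r.-tuple A).
Hypothesis gen_X : generates X.
Local Notation m := (\dim {:A}).

Lemma line_det_poly : exists P : {poly F},
  [/\ P != 0, leq (size P) (muln m m.-1).+1 &
      forall mu, ~~ root P mu -> generates (line X d mu)].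
Proof.
set L := m.-1; have [msk [free_msk span_msk]] := free_mask_span (monomials X L).
set Q := mask msk (monomial_polys X d L).
have eval_Q mu : [seq p.[mu%:A] | p <- Q] = mask msk (monomials (line X d mu) L).
  by rewrite map_mask horner_monomial_polys.
have size_Q : size Q == m.
  move: free_msk; rewrite /free span_msk span_monomials_full // => /eqP ->.
  by rewrite -(line0 X d) -eval_Q size_map.
pose Y mu := map_tuple (fun p => p.[mu%:A]) (Tuple size_Q).
have eval_Y mu : (Y mu : seq A) = mask msk (monomials (line X d mu) L) by rewrite -eval_Q.
pose M := \matrix_(i, j) map_poly (coord (vbasis {:A}) j) (tnth (Tuple size_Q) i).
have horner_det mu : (\det M).[mu] = \det (coord_mx (Y mu)).
  rewrite -horner_evalE -det_map_mx; congr (\det _); apply/matrixP => i j.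
  by rewrite !mxE /= horner_evalE horner_map_coord tnth_map.
exists (\det M); split.
- apply: contraTneq free_msk => det0.
  by rewrite -(line0 X d) -eval_Y -det_coord_mx -horner_det det0 horner0 eqxx.
- apply: size_det_leq => i j; rewrite mxE map_polyE (leq_trans (size_Poly _)) // size_map.
  by apply/size_monomial_polys/(mem_mask (m := msk))/(mem_tnth i (Tuple size_Q)).
move=> mu not_root; apply: (generates_monomials (l := L)); apply/eqP.
rewrite eqEsubv subvf /=; apply: subv_trans (_ : <<Y mu>> <= _)%VS.
  have free_Y : free (Y mu) by rewrite -det_coord_mx -horner_det.
  have : <<Y mu>>%VS == fullv.
    move: free_Y; rewrite eqEdim subvf /free => /eqP ->.
    by rewrite /= size_map (eqP size_Q).
  by move/eqP->.
by apply: sub_span => y; rewrite eval_Y => /mem_mask.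
Qed.

End LineDeterminant.

Section Counting.
Variables (F : finFieldType) (A : falgType F) (r : nat).
Local Notation m := (\dim {:A}).
Local Notation q := #|F|.
Local Notation T := (finvect_type A).

Lemma card_finvect : #|T| = expn q m.
Proof.
have := @card_vspace F T (Vector.class T) fullv.
by rewrite (@card_vspacef F T (Vector.class T)) => ->; rewrite !dimvf.
Qed.

Lemma card_line_nongenerating (X d : r.-tuple A) : generates X ->
  (#|[set mu : F | ~~ generatesb (A := A) (line X d mu)]| <= muln m m.-1)%nat.
Proof.
move=> gen_X; have [P [P_neq0 size_P gen_P]] := line_det_poly d gen_X.
apply: leq_trans (_ : #|[set mu | root P mu]| <= _)%nat.
  apply/subset_leq_card/subsetP => mu; rewrite !inE; apply: contraR => /gen_P.
  by move/generatesbP->.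
by rewrite (leq_trans (card_root_leq P_neq0)) // -subn1 leq_subLR add1n.
Qed.

(* For mu != 0 the map d |-> line X d mu permutes r-tuples, so each non-generating
   r-tuple lies on q - 1 of the punctured lines through X. *)
Lemma ng_line_average (X : r.-tuple A) : generates X ->
  (muln q.-1 (ng A r) <= muln (expn q (muln m r)) (muln m m.-1))%nat.
Proof.
move=> gen_X; set NG := [set t : r.-tuple T | ~~ generatesb (A := A) t].
have ng_line mu : mu != 0 ->
    (ng A r = \sum_(d : r.-tuple T) ((line X d mu : r.-tuple T) \in NG))%nat.
  move=> mu_neq0; rewrite -[ng A r]/#|NG|.
  rewrite -(card_preimset _ (f := fun d : r.-tuple T => line X d mu)).
    by rewrite -sum1_card big_mkcond; apply: eq_bigr => d _; rewrite inE; case: (_ \in _).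
  move=> d d' eq_dd'; apply: eq_from_tnth => j.
  move/(congr1 (fun t => tnth t j)): eq_dd'; rewrite !tnth_mktuple => /addrI.
  exact: scalerI.
have -> : muln q.-1 (ng A r) =
    (\sum_(mu | mu != GRing.zero) \sum_(d : r.-tuple T)
       ((line X d mu : r.-tuple T) \in NG))%nat.
  by rewrite -(cardC1 0) -sum_nat_const; apply: eq_big => // mu /ng_line.
rewrite exchange_big /= expnM -card_finvect -card_tuple -sum_nat_const.
apply: leq_sum => d _.
apply: leq_trans (card_line_nongenerating d gen_X).
rewrite -sum1_card big_mkcond [X in (_ <= X)%nat]big_mkcond; apply: leq_sum => mu _.
by rewrite !inE; case: (mu != 0); case: (generatesb _).
Qed.

End Counting.

Lemma ng_le (F : finFieldType) (A : falgType F) (r : nat) (X : r.-tuple A) :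
  generates X -> (0 < r)%nat ->
  (ng A r <= muln (muln (\dim {:A}) (\dim {:A})) (expn #|F| (muln (\dim {:A}) r).-1))%nat.
Proof.
move=> gen_X r_gt0; set m := \dim {:A}; set q := #|F|.
have m_gt0 : (0 < m)%nat by apply: adim_gt0.
have q_gt1 : (1 < q)%nat := card_finNzRing_gt1 F.
have q_pow : expn q (muln m r) = muln q (expn q (muln m r).-1).
  by rewrite -expnS prednK // muln_gt0 m_gt0.
have [q_le_m | m_lt_q] := leqP q m.
  apply: leq_trans (max_card _) _; rewrite card_tuple card_finvect -expnM q_pow.
  by rewrite leq_mul2r (leq_trans q_le_m) ?orbT // leq_pmulr.
have q1_gt0 : (0 < q.-1)%nat by rewrite -subn1 subn_gt0.
rewrite -(leq_pmul2l q1_gt0) (leq_trans (ng_line_average gen_X)) // q_pow.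
rewrite -/m mulnAC [X in (_ <= X)%nat]mulnA leq_mul2r; apply/orP; right; nia.
Qed.

Lemma INR_expn (a b : nat) : INR (expn a b) = (INR a ^ b)%R.
Proof. by elim: b => [|b IHb]; rewrite ?expn0 // expnS mulnE mult_INR IHb. Qed.

Lemma INR_le_Rpower (x B k r : nat) : (0 < r)%nat -> (0 < B)%nat ->
  (expn x r <= expn B k)%nat -> (INR x <= Rpower (INR B) (INR k / INR r))%R.
Proof.
move=> r_gt0 B_gt0 le_xB.
have r_pos : (0 < INR r)%R by apply: lt_0_INR; apply/ssrnat.ltP.
have B_pos : (0 < INR B)%R by apply: lt_0_INR; apply/ssrnat.ltP.
have [-> | x_gt0] := posnP x; first by apply/Rlt_le/exp_pos.
have x_pos : (0 < INR x)%R by apply: lt_0_INR; apply/ssrnat.ltP.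
have -> : INR x = Rpower (INR x ^ r) (/ INR r).
  by rewrite -Rpower_pow // Rpower_mult Rinv_r ?Rpower_1 //; apply: Rgt_not_eq.
rewrite /Rdiv -Rpower_mult Rpower_pow //.
apply: Rle_Rpower_l; first exact/Rlt_le/Rinv_0_lt_compat.
by split; [apply: pow_lt | rewrite -!INR_expn; apply/le_INR/ssrnat.leP].
Qed.

Lemma Rpower_ng_bound (m q r k : nat) : (0 < m)%nat -> (0 < q)%nat -> (0 < r)%nat ->
  Rpower (INR (muln (muln m m) (expn q (muln m r).-1))) (INR k / INR r) =
  (Rpower (INR m) (2 * INR k / INR r) * Rpower (INR q) (INR m * INR k - INR k / INR r))%R.
Proof.
move=> m_gt0 q_gt0 r_gt0.
have r_neq0 : INR r <> 0%R by apply/not_0_INR/eqP; rewrite -lt0n.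
have m_pos : (0 < INR m)%R by apply: lt_0_INR; apply/ssrnat.ltP.
have q_pos : (0 < INR q)%R by apply: lt_0_INR; apply/ssrnat.ltP.
have mr_pred : INR (muln m r).-1 = (INR m * INR r - 1)%R.
  rewrite -subn1 minus_INR ?mulnE ?mult_INR //.
  by apply/ssrnat.leP; rewrite muln_gt0 m_gt0.
rewrite !mulnE !mult_INR INR_expn -Rpower_pow // mr_pred.
have mm_pos : (0 < INR m * INR m)%R by apply: Rmult_lt_0_compat.
rewrite -Rpower_mult_distr //; last exact: exp_pos.
rewrite -Rpower_mult_distr // Rpower_mult -Rpower_plus.
by congr (Rpower _ _ * Rpower _ _)%R; field.
Qed.

Local Close Scope ring_scope.

Theorem mainTheorem6 (F : finFieldType) (A : falgType F) (r : nat) :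
  (1 <= r)%N ->
  (exists X : r.-tuple A, generates X) ->
  forall k : nat, (r < k)%N ->
  (INR (ng A k) <=
     Rpower (INR (\dim (fullv : {vspace A}))) (2 * INR k / INR r) *
     Rpower (INR #|F|)
       (INR (\dim (fullv : {vspace A})) * INR k - INR k / INR r))%R.
Proof.
move=> r_gt0 [X gen_X] k r_lt_k.
have m_gt0 : (0 < \dim {:A})%nat by apply: adim_gt0.
have q_gt0 : (0 < #|F|)%nat by apply/ltnW/card_finNzRing_gt1.
rewrite -Rpower_ng_bound //; apply: INR_le_Rpower => //.
  by rewrite !muln_gt0 m_gt0 expn_gt0 q_gt0.
apply: leq_trans (ng_exp_le A r_gt0 (ltnW r_lt_k)) _.
rewrite leq_exp2r; first exact: ng_le gen_X r_gt0.
exact: leq_trans r_gt0 (ltnW r_lt_k).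
Qed.
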